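(* Let $p$ be a prime, let $m\ge 0$ be an integer, and let $f:\mathbb{Z}_p\to\mathbb{Z}_p$ be an arithmetic differential operator of order $m$. Then $f$ is an analytic function of level $m$.
   Context: $\mathbb{Z}_p$ denotes the ring of $p$-adic integers with the $p$-adic norm $|\cdot|_p$, $|p|_p=p^{-1}$. The Fermat quotient operator is $\delta:\mathbb{Z}_p\to\mathbb{Z}_p$, $\delta a=(a-a^p)/p$, and $\delta^i$ denotes its $i$-th iterate. A power series $F=\sum_{\alpha} a_\alpha x^\alpha\in\mathbb{Z}_p[[x_0,\dots,x_k]]$ is called restricted if $a_\alpha\to 0$ $p$-adically as $|\alpha|=\alpha_0+\dots+\alpha_k\to\infty$. A function $f:\mathbb{Z}_p\to\mathbb{Z}_p$ is an arithmetic differential operator of order $m$ if there is a restricted power series $F\in\mathbb{Z}_p[[x_0,\dots,x_m]]$ with $f(a)=F(a,\delta a,\dots,\delta^m a)$ for all $a\in\mathbb{Z}_p$. A function $f:\mathbb{Z}_p\to\mathbb{Z}_p$ is analytic of level $m$ if for every $a\in\mathbb{Z}_p$ there is a restricted power series $F_a\in\mathbb{Z}_p[[x]]$ (one variable) such that $f(a+p^m u)=F_a(u)$ for all $u\in\mathbb{Z}_p$. *)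

From mathcomp Require Import all_boot.
Set Implicit Arguments. Unset Strict Implicit. Unset Printing Implicit Defensive.

(* p-adic integers, represented by their canonical residues:
   x n is the residue of x modulo p^n (0 <= x n < p^n), compatible. *)
Definition is_Zp (p : nat) (x : nat -> nat) : Prop :=
  forall n, x n < p ^ n /\ x n.+1 %% p ^ n = x n.

Definition Zp (p : nat) := {x : nat -> nat | is_Zp p x}.

(* Fermat quotient delta a = (a - a^p)/p on residue sequences:
   (delta a) mod p^n is computed from a mod p^(n+1) =: b as
   -((b^p - b)/p) mod p^n. *)
Definition delta (p : nat) (x : nat -> nat) : nat -> nat :=
  fun n => (p ^ n - ((x n.+1 ^ p - x n.+1) %/ p) %% p ^ n) %% p ^ n.

Definition mindex (k : nat) := {ffun 'I_k -> nat}.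

(* A power series in k variables with coefficients in Z_p is
   restricted: a_alpha -> 0 p-adically as |alpha| -> oo. *)
Definition restricted (p k : nat) (a : mindex k -> Zp p) : Prop :=
  forall n, exists N, forall alpha : mindex k,
    N <= \sum_(i < k) alpha i -> proj1_sig (a alpha) n = 0.

Definition partial_sum (p k : nat) (a : mindex k -> Zp p)
    (x : 'I_k -> nat -> nat) (N n : nat) : nat :=
  (\sum_(alpha : {ffun 'I_k -> 'I_N} | \sum_(i < k) (alpha i : nat) < N)
     proj1_sig (a [ffun i => (alpha i : nat)]) n *
     \prod_(i < k) x i n ^ (alpha i)) %% p ^ n.

Definition series_eval (p k : nat) (a : mindex k -> Zp p)
    (x : 'I_k -> nat -> nat) (y : nat -> nat) : Prop :=
  forall n, exists N, forall N', N <= N' -> y n = partial_sum a x N' n.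

Definition arith_diff_op (p m : nat) (f : Zp p -> Zp p) : Prop :=
  exists F : mindex m.+1 -> Zp p, restricted F /\
    forall a : Zp p,
      series_eval F (fun i : 'I_m.+1 => iter i (delta p) (proj1_sig a))
                  (proj1_sig (f a)).

(* f is analytic of level m: for every a there is a restricted F_a in one
   variable with f(a + p^m u) = F_a(u) for all u. *)
Definition analytic_level (p m : nat) (f : Zp p -> Zp p) : Prop :=
  forall a : Zp p, exists F : mindex 1 -> Zp p, restricted F /\
    forall u b : Zp p,
      (forall n, proj1_sig b n = (proj1_sig a n + p ^ m * proj1_sig u n) %% p ^ n) ->
      series_eval F (fun _ : 'I_1 => proj1_sig u) (proj1_sig (f b)).

(* Write b = a + p^m u and let A be an integer lift of a.  The polynomial
   A + p^m X is congruent to a constant modulo p^m, so its Fermat quotient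
   (P - P^p)/p is again an integer polynomial, congruent to a constant modulo
   p^(m-1); iterating, delta^i b is the value at u of an integer polynomial
   for every i <= m.  Substituting these polynomials into the truncation of F
   at precision p^n gives integer polynomials Q_n with f(b) = Q_n(u) modulo
   p^n, and Q_n = Q_(n+1) modulo p^n coefficientwise; the p-adic limits of
   the coefficients form the restricted series F_a. *)

From mathcomp Require Import all_boot all_algebra.
From mathcomp Require Import ring zify.
From Stdlib Require Import ClassicalEpsilon.
Import GRing.Theory Num.Theory.
Set Implicit Arguments. Unset Strict Implicit. Unset Printing Implicit Defensive.
Local Open Scope ring_scope.

Definition eqmodp (R : comNzRingType) (p j : nat) (x y : R) :=
  exists d, y = x + p%:R ^+ j * d.

Section Congruence.
Variables (R : comNzRingType) (p j : nat).

Lemma eqmodp_refl (x : R) : eqmodp p j x x.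
Proof. by exists 0; rewrite mulr0 addr0. Qed.

Lemma eqmodp_sym (x y : R) : eqmodp p j x y -> eqmodp p j y x.
Proof. by case=> d ->; exists (- d); ring. Qed.

Lemma eqmodp_trans (x y z : R) :
  eqmodp p j x y -> eqmodp p j y z -> eqmodp p j x z.
Proof. by case=> d -> [e ->]; exists (d + e); ring. Qed.

Lemma eqmodpD (x y x' y' : R) :
  eqmodp p j x x' -> eqmodp p j y y' -> eqmodp p j (x + y) (x' + y').
Proof. by case=> d -> [e ->]; exists (d + e); ring. Qed.

Lemma eqmodpB (x y x' y' : R) :
  eqmodp p j x x' -> eqmodp p j y y' -> eqmodp p j (x - y) (x' - y').
Proof. by case=> d -> [e ->]; exists (d - e); ring. Qed.

Lemma eqmodpM (x y x' y' : R) :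
  eqmodp p j x x' -> eqmodp p j y y' -> eqmodp p j (x * y) (x' * y').
Proof.
by case=> d -> [e ->]; exists (d * y + x * e + p%:R ^+ j * d * e); ring.
Qed.

Lemma eqmodp0M (x y : R) : eqmodp p j 0 x -> eqmodp p j 0 (x * y).
Proof. by case=> d ->; exists (d * y); ring. Qed.

Lemma eqmodpX (x x' : R) k : eqmodp p j x x' -> eqmodp p j (x ^+ k) (x' ^+ k).
Proof.
move=> xx'; elim: k => [|k IHk]; first exact: eqmodp_refl.
by rewrite !exprS; apply: eqmodpM.
Qed.

Lemma eqmodp_sum (I : Type) (r : seq I) (P : pred I) (F G : I -> R) :
  (forall i, P i -> eqmodp p j (F i) (G i)) ->
  eqmodp p j (\sum_(i <- r | P i) F i) (\sum_(i <- r | P i) G i).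
Proof.
move=> FG; apply: (big_ind2 (eqmodp p j)) => //; first exact: eqmodp_refl.
by move=> ? ? ? ?; apply: eqmodpD.
Qed.

Lemma eqmodp_sum0 (I : Type) (r : seq I) (P : pred I) (G : I -> R) :
  (forall i, P i -> eqmodp p j 0 (G i)) -> eqmodp p j 0 (\sum_(i <- r | P i) G i).
Proof. by move=> G0; have := eqmodp_sum r G0; rewrite big1_eq. Qed.

Lemma eqmodp_prod (I : Type) (r : seq I) (P : pred I) (F G : I -> R) :
  (forall i, P i -> eqmodp p j (F i) (G i)) ->
  eqmodp p j (\prod_(i <- r | P i) F i) (\prod_(i <- r | P i) G i).
Proof.
move=> FG; apply: (big_ind2 (eqmodp p j)) => //; first exact: eqmodp_refl.
by move=> ? ? ? ?; apply: eqmodpM.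
Qed.

Lemma eqmodp_weaken i (x y : R) : (i <= j)%N -> eqmodp p j x y -> eqmodp p i x y.
Proof.
by move=> ij [d ->]; exists (p%:R ^+ (j - i) * d); rewrite mulrA -exprD subnKC.
Qed.

Lemma eqmodp_rmorph (S : comNzRingType) (f : {rmorphism R -> S}) (x y : R) :
  eqmodp p j x y -> eqmodp p j (f x) (f y).
Proof.
by case=> d ->; exists (f d); rewrite rmorphD rmorphM rmorphXn rmorph_nat.
Qed.

End Congruence.

Lemma eqmodp_coef (p j : nat) (P Q : {poly int}) k :
  eqmodp p j P Q -> eqmodp p j P`_k Q`_k.
Proof.
by case=> d ->; exists d`_k; rewrite coefD -polyC_natr -rmorphXn coefCM.
Qed.

Lemma natz_exp (p j : nat) : (p ^ j)%N = p%:R ^+ j :> int.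
Proof. by rewrite -natrX natz. Qed.

Lemma eqmodp_nat (p j x y : nat) :
  eqmodp p j (x : int) (y : int) <-> x = y %[mod p ^ j].
Proof.
split=> [[d xy]|xy].
  apply/eqP; rewrite -eqz_nat -!modz_nat xy.
  by rewrite -natz_exp addrC mulrC modzMDl.
exists ((y %/ p ^ j)%N%:Z - (x %/ p ^ j)%N%:Z).
rewrite {1}(divn_eq x (p ^ j)) {1}(divn_eq y (p ^ j)) xy !PoszD !PoszM natz_exp.
ring.
Qed.

Lemma eqmodp_modz (p j : nat) (z : int) : eqmodp p j (z %% (p ^ j)%N)%Z z.
Proof.
by exists (z %/ (p ^ j)%N)%Z; rewrite -natz_exp addrC mulrC -divz_eq.
Qed.

Lemma eqmodp_expp (R : comNzRingType) (p k : nat) (x y : R) : (0 < p)%N ->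
  eqmodp p k.+1 x y -> eqmodp p k.+2 (x ^+ p) (y ^+ p).
Proof.
case: p => // p _ [d ->].
have binom n : exists S, (x + p.+1%:R ^+ k.+1 * d) ^+ n.+1 =
    x ^+ n.+1 + p.+1%:R ^+ k.+1 * (n.+1%:R * x ^+ n * d) + (p.+1%:R ^+ k.+1 * d) ^+ 2 * S.
  elim: n => [|n [S IHn]]; first by exists 0; rewrite !expr1 expr0; ring.
  exists (x * S + n.+1%:R * x ^+ n + p.+1%:R ^+ k.+1 * d * S).
  by rewrite exprS IHn !exprS -[n.+2]addn1 -[n.+1]addn1 !natrD; ring.
have [S ->] := binom p.
by exists (x ^+ p * d + p.+1%:R ^+ k * d ^+ 2 * S); rewrite !exprS; ring.
Qed.

Lemma fermat_defect_cong (R : comNzRingType) (p k : nat) (x y t : R) :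
  (0 < p)%N -> x - x ^+ p = p%:R * t -> eqmodp p k.+1 x y ->
  exists2 t', y - y ^+ p = p%:R * t' & eqmodp p k t t'.
Proof.
move=> p_gt0 xt xy.
have [e ->] := eqmodpB xy (eqmodp_weaken (leqnSn _) (eqmodp_expp p_gt0 xy)).
by exists (t + p%:R ^+ k * e); [rewrite xt exprS; ring | exists e].
Qed.

Lemma eqmodp_fermat (p : nat) (x : int) : prime p -> eqmodp p 1 x (x ^+ p).
Proof.
move=> p_prime; have xr := eqmodp_sym (eqmodp_modz p 1 x).
have [n def_n] : exists n : nat, (x %% (p ^ 1)%N)%Z = n.
  exists `|(x %% (p ^ 1)%N)%Z|%N; rewrite gez0_abs // modz_ge0 //.
  by rewrite expn1 eqz_nat -lt0n prime_gt0.
rewrite def_n in xr; apply: eqmodp_trans xr (eqmodp_trans _ (eqmodpX p (eqmodp_sym xr))).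
have -> : (n : int) ^+ p = (n ^ p)%N by rewrite natz_exp natz.
by apply/eqmodp_nat; rewrite expn1 fermat_little.
Qed.

Definition fermat_quot (p : nat) (x : int) : int := ((x - x ^+ p) %/ p)%Z.

Lemma fermat_quot_eq (p : nat) (x t : int) :
  (0 < p)%N -> x - x ^+ p = p%:R * t -> fermat_quot p x = t.
Proof. by move=> p_gt0 xt; rewrite /fermat_quot xt natz mulKz // eqz_nat -lt0n. Qed.

Lemma fermat_quotE (p : nat) (x : int) :
  prime p -> x - x ^+ p = p%:R * fermat_quot p x.
Proof.
move=> p_prime; have [d xp] := eqmodp_fermat x p_prime.
have defect : x - x ^+ p = p%:R * - d by rewrite xp expr1; ring.
by rewrite (fermat_quot_eq (prime_gt0 p_prime) defect).
Qed.

Lemma fermat_quot_cong (p k : nat) (x y : int) : prime p ->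
  eqmodp p k.+1 x y -> eqmodp p k (fermat_quot p x) (fermat_quot p y).
Proof.
move=> p_prime xy; have p_gt0 := prime_gt0 p_prime.
have [t' yt' xt'] := fermat_defect_cong p_gt0 (fermat_quotE x p_prime) xy.
by rewrite (fermat_quot_eq p_gt0 yt').
Qed.

Definition fermat_quot_poly (p : nat) (P : {poly int}) : {poly int} :=
  map_poly (fun c => (c %/ p)%Z) (P - P ^+ p).

Lemma fermat_quot_poly_eq (p : nat) (P T : {poly int}) :
  (0 < p)%N -> P - P ^+ p = p%:R * T -> fermat_quot_poly p P = T.
Proof.
move=> p_gt0 PT; apply/polyP => i; rewrite /fermat_quot_poly PT coef_map_id0 ?div0z //.
by rewrite -polyC_natr coefCM natz mulKz // eqz_nat -lt0n.
Qed.

Lemma fermat_quot_poly_near_const (p k : nat) (C : int) (P : {poly int}) : prime p ->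
  eqmodp p k.+1 C%:P P ->
  P - P ^+ p = p%:R * fermat_quot_poly p P /\
  eqmodp p k (fermat_quot p C)%:P (fermat_quot_poly p P).
Proof.
move=> p_prime CP; have p_gt0 := prime_gt0 p_prime.
have C_defect : C%:P - C%:P ^+ p = p%:R * (fermat_quot p C)%:P.
  by rewrite -rmorphXn -rmorphB fermat_quotE // rmorphM rmorph_nat.
have [T PT CT] := fermat_defect_cong p_gt0 C_defect CP.
by rewrite (fermat_quot_poly_eq p_gt0 PT).
Qed.

Definition delta_poly (p m : nat) (A : int) (i : nat) : {poly int} :=
  iter i (fermat_quot_poly p) (A%:P + p%:R ^+ m * 'X).

Section DeltaPoly.
Variables (p m : nat) (A : int).
Hypothesis p_prime : prime p.

Lemma delta_poly_const i : (i <= m)%N ->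
  eqmodp p (m - i) (iter i (fermat_quot p) A)%:P (delta_poly p m A i).
Proof.
elim: i => [_|i IHi im]; first by exists 'X; rewrite subn0.
have mi : (m - i = (m - i.+1).+1)%N by lia.
have := IHi (ltnW im); rewrite mi => /(fermat_quot_poly_near_const p_prime) [_].
by rewrite /delta_poly !iterS.
Qed.

Lemma delta_poly_defect i : (i < m)%N ->
  delta_poly p m A i - delta_poly p m A i ^+ p = p%:R * delta_poly p m A i.+1.
Proof.
move=> im; have mi : (m - i = (m - i.+1).+1)%N by lia.
have := delta_poly_const (ltnW im); rewrite mi.
by case/(fermat_quot_poly_near_const p_prime); rewrite /delta_poly iterS.
Qed.

Lemma horner_delta_poly (U : int) i : (i <= m)%N ->
  (delta_poly p m A i).[U] = iter i (fermat_quot p) (A + p%:R ^+ m * U).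
Proof.
elim: i => [_|i IHi im].
  by rewrite /delta_poly /= -polyC_natr -rmorphXn hornerD hornerCM !hornerC hornerX.
rewrite iterS -IHi ?(ltnW im) //; apply/esym/(fermat_quot_eq (prime_gt0 p_prime)).
by have := congr1 (horner^~ U) (delta_poly_defect im); rewrite -polyC_natr !hornerE.
Qed.

Lemma delta_poly_cong (A' : int) j i : (i <= m)%N -> eqmodp p (j + m) A A' ->
  eqmodp p (j + (m - i)) (delta_poly p m A i) (delta_poly p m A' i).
Proof.
move=> + AA'; elim: i => [_|i IHi im].
  by rewrite subn0; apply: eqmodpD (eqmodp_rmorph polyC AA') (eqmodp_refl _ _ _).
have jm : (j + (m - i) = (j + (m - i.+1)).+1)%N by lia.
have := IHi (ltnW im); rewrite jm => PP'.
have [T PT] := fermat_defect_cong (prime_gt0 p_prime) (delta_poly_defect im) PP'.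
suff -> : delta_poly p m A' i.+1 = T by [].
exact: fermat_quot_poly_eq (prime_gt0 p_prime) PT.
Qed.

End DeltaPoly.

Lemma delta_fermat_quot (p : nat) (x : nat -> nat) n : prime p ->
  delta p x n = (fermat_quot p (x n.+1) %% (p ^ n)%N)%Z :> int.
Proof.
move=> p_prime; rewrite /delta; set b := x n.+1; set t := ((b ^ p - b) %/ p)%N.
have b_le : (b <= b ^ p)%N.
  by case: (b) => // c; rewrite -{1}(expn1 c.+1) leq_pexp2l // prime_gt0.
have -> : fermat_quot p b = - (t : int).
  apply: fermat_quot_eq (prime_gt0 p_prime) _.
  have tp : (b ^ p - b = t * p)%N by rewrite divnK // -eqn_mod_dvd // fermat_little.
  have -> : (b : int) ^+ p = (b ^ p)%N by rewrite natz_exp natz.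
  by rewrite -opprB subzn // tp PoszM natz mulrN mulrC.
have t_le : (t %% p ^ n <= p ^ n)%N by rewrite ltnW // ltn_pmod // expn_gt0 prime_gt0.
by rewrite -modz_nat -subzn // -modz_nat modzDl modzNm.
Qed.

Lemma iter_delta_eqmodp (p : nat) (x : nat -> nat) i : prime p -> forall n (X : int),
  eqmodp p (n + i) X (x (n + i)%N : int) ->
  eqmodp p n (iter i (delta p) x n : int) (iter i (fermat_quot p) X).
Proof.
move=> p_prime; elim: i => [|i IHi] n X; first by rewrite addn0 => /eqmodp_sym.
rewrite -addSnnS => /IHi Xx; rewrite !iterS delta_fermat_quot //.
exact: eqmodp_trans (eqmodp_modz _ _ _) (fermat_quot_cong p_prime Xx).
Qed.

Lemma eqmodp_Zp (p : nat) (x : nat -> nat) j k : is_Zp p x -> (j <= k)%N ->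
  eqmodp p j (x k : int) (x j : int).
Proof.
move=> xZp; elim: k => [|k IHk]; first by rewrite leqn0 => /eqP ->; apply: eqmodp_refl.
rewrite leq_eqVlt => /predU1P[-> | jk]; first exact: eqmodp_refl.
apply: eqmodp_trans (IHk jk); apply: (@eqmodp_weaken _ _ k) jk _.
by apply/eqmodp_nat; rewrite (proj2 (xZp k)) modn_small //; case: (xZp k).
Qed.

Lemma partial_sum_eqmodp_eq (p k l : nat) (a : mindex k -> Zp p) (b : mindex l -> Zp p)
    x y N M n :
  eqmodp p n (partial_sum a x N n : int) (partial_sum b y M n : int) ->
  partial_sum a x N n = partial_sum b y M n.
Proof. by move/eqmodp_nat; rewrite /partial_sum !modn_mod. Qed.

Definition sum_deg_lt (V : nmodType) (k N : nat) (G : mindex k -> V) : V :=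
  \sum_(a : {ffun 'I_k -> 'I_N} | (\sum_(i < k) (a i : nat) < N)%N)
    G [ffun i => (a i : nat)].

Lemma sum_ffun_ord k N (a : {ffun 'I_k -> 'I_N}) :
  \sum_(i < k) [ffun i => (a i : nat)] i = \sum_(i < k) (a i : nat).
Proof. by apply: eq_bigr => i _; rewrite ffunE. Qed.

Lemma sum_deg_lt_split (V : nmodType) k N M (G : mindex k -> V) : (N <= M)%N ->
  sum_deg_lt M G = sum_deg_lt N G +
    \sum_(a : {ffun 'I_k -> 'I_M} | (N <= \sum_(i < k) (a i : nat) < M)%N)
      G [ffun i => (a i : nat)].
Proof.
move=> NM; rewrite /sum_deg_lt (bigID (fun a : {ffun 'I_k -> 'I_M} =>
  (\sum_(i < k) (a i : nat) < N)%N)) /=; congr (_ + _); last first.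
  by apply: eq_bigl => a; rewrite -leqNgt andbC.
case: N NM => [|N] NM; first by rewrite !big_pred0 // => a; rewrite ltn0 ?andbF.
have deg_bound (a : {ffun 'I_k -> 'I_M}) i :
    (\sum_(i < k) (a i : nat) < N.+1)%N -> (a i < N.+1)%N.
  by move=> a_deg; apply: leq_ltn_trans a_deg; rewrite (bigD1 i) //= leq_addr.
rewrite (reindex_onto (fun a : {ffun 'I_k -> 'I_N.+1} => [ffun i => widen_ord NM (a i)])
  (fun a : {ffun 'I_k -> 'I_M} => [ffun i => inord (a i)])) /=; last first.
  move=> a /andP[_ a_deg]; apply/ffunP => i; rewrite !ffunE; apply: val_inj.
  by rewrite /= inordK // deg_bound.
apply: eq_big => [a|a _]; last by congr G; apply/ffunP => i; rewrite !ffunE.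
have -> : (\sum_(i < k) ([ffun i => widen_ord NM (a i)] i : nat) = \sum_(i < k) (a i : nat))%N.
  by apply: eq_bigr => i _; rewrite ffunE.
case a_deg: (\sum_(i < k) (a i : nat) < N.+1)%N; rewrite ?andbF //.
rewrite (leq_trans a_deg NM) andbT; apply/eqP/ffunP => i.
by rewrite !ffunE; apply: val_inj; rewrite /= inordK // ffunE.
Qed.

Lemma eqmodp_sum_deg_lt (R : comNzRingType) (p j k N M : nat) (G H : mindex k -> R) :
  (N <= M)%N ->
  (forall a : mindex k, (\sum_(i < k) a i < N)%N -> eqmodp p j (G a) (H a)) ->
  (forall a : mindex k, (N <= \sum_(i < k) a i)%N -> eqmodp p j 0 (H a)) ->
  eqmodp p j (sum_deg_lt N G) (sum_deg_lt M H).
Proof.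
move=> NM GH H0; rewrite (sum_deg_lt_split H NM) -[sum_deg_lt N G]addr0.
apply: eqmodpD; first by apply: eqmodp_sum => a a_deg; apply: GH; rewrite sum_ffun_ord.
by apply: eqmodp_sum0 => a /andP[a_deg _]; apply: H0; rewrite sum_ffun_ord.
Qed.

Lemma sum_deg_lt1 (V : nmodType) K (G : mindex 1 -> V) :
  sum_deg_lt K G = \sum_(j < K) G [ffun _ => (j : nat)].
Proof.
rewrite /sum_deg_lt (eq_bigl predT) => [|a]; last by rewrite big_ord1 ltn_ord.
rewrite (reindex (fun j : 'I_K => [ffun _ : 'I_1 => j])) /=.
  by apply: eq_bigr => j _; congr G; apply/ffunP => i; rewrite !ffunE.
exists (fun a : {ffun 'I_1 -> 'I_K} => a ord0) => [j _|a _]; first exact: ffunE.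
by apply/ffunP => i; rewrite ffunE (ord1 i).
Qed.

Lemma partial_sum_eqmodp (p k : nat) (a : mindex k -> Zp p) (x : 'I_k -> nat -> nat) N n :
  eqmodp p n (partial_sum a x N n : int)
    (sum_deg_lt N (fun b => (sval (a b) n : int) * \prod_(i < k) (x i n : int) ^+ b i)).
Proof.
rewrite /partial_sum -modz_nat; apply: eqmodp_trans (eqmodp_modz _ _ _) _.
rewrite -natz natr_sum; apply: eqmodp_sum => b _.
rewrite natrM natz natr_prod; apply: eqmodpM (eqmodp_refl _ _ _) _.
by apply: eqmodp_prod => i _; rewrite natrX natz ffunE; apply: eqmodp_refl.
Qed.

Section PolyLimit.
Variables (p : nat) (Q : nat -> {poly int}).
Hypotheses (p_gt0 : (0 < p)%N) (Q_cauchy : forall n, eqmodp p n (Q n) (Q n.+1)).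

Definition limit_coef k n : nat := `|((Q n)`_k %% (p ^ n)%N)%Z|%N.

Lemma limit_coefE k n : limit_coef k n = ((Q n)`_k %% (p ^ n)%N)%Z :> int.
Proof. by rewrite gez0_abs // modz_ge0 // eqz_nat -lt0n expn_gt0 p_gt0. Qed.

Lemma limit_coef_Zp k : is_Zp p (limit_coef k).
Proof.
have lt_pn j : (limit_coef k j < p ^ j)%N.
  by rewrite -ltz_nat limit_coefE ltz_pmod // ltz_nat expn_gt0 p_gt0.
move=> n; split=> //; rewrite -[RHS](modn_small (lt_pn n)); apply/eqmodp_nat.
rewrite !limit_coefE; apply: eqmodp_trans (eqmodp_weaken (leqnSn n) (eqmodp_modz _ _ _)) _.
exact: eqmodp_trans (eqmodp_sym (eqmodp_coef k (Q_cauchy n))) (eqmodp_sym (eqmodp_modz _ _ _)).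
Qed.

Definition limit_series (a : mindex 1) : Zp p :=
  exist _ (limit_coef (a ord0)) (limit_coef_Zp (a ord0)).

Lemma limit_series_restricted : restricted limit_series.
Proof.
move=> n; exists (size (Q n)) => a; rewrite big_ord1 => a_big.
by apply/eqP; rewrite -eqz_nat limit_coefE nth_default // mod0z.
Qed.

Lemma limit_series_eval (u : Zp p) n K (U : int) : (size (Q n) <= K)%N ->
  eqmodp p n U (sval u n : int) ->
  eqmodp p n (Q n).[U] (partial_sum limit_series (fun=> sval u) K n : int).
Proof.
move=> QK Uu; apply: eqmodp_trans (eqmodp_sym (partial_sum_eqmodp _ _ _ _)).
rewrite sum_deg_lt1 (horner_coef_wide _ QK); apply: eqmodp_sum => j _.
rewrite big_ord1 /= !ffunE limit_coefE.
exact: eqmodpM (eqmodp_sym (eqmodp_modz _ _ _)) (eqmodpX _ Uu).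
Qed.

End PolyLimit.

Lemma horner_sum_deg_lt k N (G : mindex k -> {poly int}) (x : int) :
  (sum_deg_lt N G).[x] = sum_deg_lt N (fun b => (G b).[x]).
Proof. exact: horner_sum. Qed.

Section TruncatedApproximation.
Variables (p m : nat) (F : mindex m.+1 -> Zp p) (a : Zp p).
Hypotheses (p_prime : prime p) (F_restricted : restricted F).

(* The running maximum makes the truncation degree monotone in the precision. *)
Let vanish_bound n := sval (constructive_indefinite_description _ (F_restricted n)).

Definition deg_bound n : nat := \max_(j < n.+1) vanish_bound j.

Lemma deg_bound_mono n : (deg_bound n <= deg_bound n.+1)%N.
Proof. by rewrite /deg_bound [in X in (_ <= X)%N]big_ord_recr leq_maxl. Qed.

Lemma deg_bound_vanish n (b : mindex m.+1) :
  (deg_bound n <= \sum_(i < m.+1) b i)%N -> sval (F b) n = 0%N.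
Proof.
move=> b_deg; apply: (proj2_sig (constructive_indefinite_description _ (F_restricted n))).
exact: leq_trans (leq_bigmax (F := fun j : 'I_n.+1 => vanish_bound j) ord_max) b_deg.
Qed.

(* [a] is lifted to precision p^(n + m) because each Fermat quotient costs one p-adic digit. *)
Definition approx_poly n : {poly int} :=
  sum_deg_lt (deg_bound n) (fun b => (sval (F b) n : int)%:P *
    \prod_(i < m.+1) delta_poly p m (sval a (n + m)%N) i ^+ b i).

Lemma approx_poly_cauchy n : eqmodp p n (approx_poly n) (approx_poly n.+1).
Proof.
apply: eqmodp_sum_deg_lt (deg_bound_mono n) _ _ => b b_deg.
  apply: eqmodpM.
    apply: (eqmodp_rmorph polyC).
    exact: eqmodp_sym (eqmodp_Zp (proj2_sig (F b)) (leqnSn n)).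
  apply: eqmodp_prod => i _; apply: eqmodpX.
  apply: (eqmodp_weaken (leq_addr (m - i) n)); apply: delta_poly_cong => //.
    by rewrite -ltnS.
  by apply: eqmodp_sym; apply: eqmodp_Zp (proj2_sig a) _; rewrite leq_add2r.
apply: eqmodp0M; apply: (eqmodp_rmorph polyC).
apply: eqmodp_trans (eqmodp_sym (eqmodp_Zp (proj2_sig (F b)) (leqnSn n))).
by rewrite (deg_bound_vanish b_deg); apply: eqmodp_refl.
Qed.

Lemma approx_poly_eval (u b : Zp p) n N :
  (forall n, sval b n = (sval a n + p ^ m * sval u n) %% p ^ n)%N ->
  (deg_bound n <= N)%N ->
  eqmodp p n (approx_poly n).[sval u (n + m)%N]
    (partial_sum F (fun i : 'I_m.+1 => iter i (delta p) (sval b)) N n : int).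
Proof.
move=> b_def nN; apply: eqmodp_trans _ (eqmodp_sym (partial_sum_eqmodp _ _ _ _)).
have X_b i : (i <= m)%N -> eqmodp p (n + i)
    ((sval a (n + m)%N : int) + p%:R ^+ m * (sval u (n + m)%N : int)) (sval b (n + i)%N : int).
  move=> im; rewrite b_def -modz_nat; apply: eqmodp_trans (eqmodp_sym (eqmodp_modz _ _ _)).
  have nim : (n + i <= n + m)%N by rewrite leq_add2l.
  rewrite PoszD PoszM natz_exp; apply: eqmodpD; first exact: eqmodp_Zp (proj2_sig a) nim.
  exact: eqmodpM (eqmodp_refl _ _ _) (eqmodp_Zp (proj2_sig u) nim).
rewrite horner_sum_deg_lt; apply: eqmodp_sum_deg_lt nN _ _ => c c_deg; last first.
  by apply: eqmodp0M; rewrite (deg_bound_vanish c_deg); apply: eqmodp_refl.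
rewrite hornerCM horner_prod; apply: eqmodpM (eqmodp_refl _ _ _) _.
apply: eqmodp_prod => i _; have im : (i <= m)%N by rewrite -ltnS.
rewrite horner_exp (horner_delta_poly _ p_prime _ im).
exact: eqmodpX (eqmodp_sym (iter_delta_eqmodp p_prime (X_b i im))).
Qed.

End TruncatedApproximation.

Theorem theorem1p4 (p m : nat) (f : Zp p -> Zp p) :
  prime p -> @arith_diff_op p m f -> @analytic_level p m f.
Proof.
move=> p_prime [F [F_restricted F_eval]] a.
have Q_cauchy := approx_poly_cauchy a p_prime F_restricted.
exists (limit_series (prime_gt0 p_prime) Q_cauchy).
split=> [|u b b_def n]; first exact: limit_series_restricted.
have [N0 fb_eval] := F_eval b n.
exists (size (approx_poly a F_restricted n)) => K QK.
rewrite (fb_eval _ (leq_maxl N0 (deg_bound F_restricted n))).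
apply: partial_sum_eqmodp_eq.
apply: eqmodp_trans (eqmodp_sym (approx_poly_eval p_prime b_def (leq_maxr _ _))) _.
exact: limit_series_eval QK (eqmodp_Zp (proj2_sig u) (leq_addr m n)).
Qed.
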